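(* Let $\mathcal{G}$ be a locally finite, one-ended, hyperfinite, measure class preserving measurable graph on a standard probability space $(X,\nu)$, with measurable spanning tree $\mathcal{T}$. Then for $\nu$-a.e. $x$, letting $G$ be the $\mathcal G$-component of $x$ and $T=\mathcal T\cap G$, either $T\setminus\mathrm{Core}_{\mathcal{T}}(\mathcal{G})=T$ or all connected components of $T\setminus\mathrm{Core}_{\mathcal{T}}(\mathcal{G})$ are finite.
   Context: mcp: Borel bijections of $X$ with graph inside the connectedness relation of $\mathcal G$ preserve $\nu$-null sets. Hyperfinite: increasing union of measurable graphs with a.e. finite components. One-ended: a.e. component is one-ended. A measurable spanning tree is a measurable acyclic subgraph with the same components as $\mathcal G$ a.e. A fundamental cycle relative to $\mathcal T$ is a cycle in $\mathcal G$ with exactly one edge not in $\mathcal T$; $\mathrm{Core}_{\mathcal T}(\mathcal G)$ is the set of edges of $\mathcal T$ lying in infinitely many fundamental cycles. *)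

From HB Require Import structures.
From mathcomp Require Import all_boot all_order all_algebra.
From mathcomp Require Import all_classical all_reals all_analysis.
Set Implicit Arguments. Unset Strict Implicit. Unset Printing Implicit Defensive.
Import Order.TTheory GRing.Theory Num.Theory.
Local Open Scope classical_set_scope.
Local Open Scope ring_scope.

Section Graphs.
Variable X : Type.
Implicit Types (E : X -> X -> Prop) (A : set X).

Definition simple_graph E := (forall x y, E x y -> E y x) /\ (forall x, ~ E x x).

Definition connect_in A E x y :=
  exists (n : nat) (p : nat -> X), p 0%N = x /\ p n = y /\
    (forall i, (i <= n)%N -> A (p i)) /\ (forall i, (i < n)%N -> E (p i) (p i.+1)).

Definition connect E x y := connect_in setT E x y.

Definition gcomp E x : set X := [set y | connect E x y].

Definition locally_finite E := forall x, finite_set [set y | E x y].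

Definition is_cycle E (n : nat) (p : nat -> X) :=
  (3 <= n)%N /\
  (forall i j, (i < n)%N -> (j < n)%N -> p i = p j -> i = j) /\
  (forall i, (i < n)%N -> E (p i) (p (i.+1 %% n)%N)).

Definition cycle_edges (n : nat) (p : nat -> X) : set (X * X) :=
  [set e | exists i, (i < n)%N /\
     (e = (p i, p (i.+1 %% n)%N) \/ e = (p (i.+1 %% n)%N, p i))].

Definition acyclic E := forall n p, ~ is_cycle E n p.

Definition fundamental_cycle E (T : X -> X -> Prop) (C : set (X * X)) :=
  exists n p, is_cycle E n p /\ C = cycle_edges n p /\
    exists a b, [set e | C e /\ ~ T e.1 e.2] = [set (a, b)] `|` [set (b, a)].

Definition core E (T : X -> X -> Prop) : set (X * X) :=
  [set e | T e.1 e.2 /\ infinite_set [set C | fundamental_cycle E T C /\ C e]].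

Definition one_ended_at E x :=
  forall F : set X, finite_set F ->
    let V := gcomp E x `\` F in
    (exists y, V y /\ infinite_set [set z | connect_in V E y z]) /\
    (forall y1 y2, V y1 -> V y2 ->
       infinite_set [set z | connect_in V E y1 z] ->
       infinite_set [set z | connect_in V E y2 z] -> connect_in V E y1 y2).

Definition minus_core E (T : X -> X -> Prop) : X -> X -> Prop :=
  fun u v => T u v /\ ~ core E T (u, v).

End Graphs.

Section Measurable.
Context {d : measure_display} {X : measurableType d} {R : realType}.

(** Standard Borel space, via Kuratowski: Borel isomorphic to a Borel subset of R. *)
Definition standard_borel :=
  exists f : X -> R, measurable_fun setT f /\ injective f /\
    (forall A, measurable A -> measurable (f @` A)).

Definition measurable_graph (E : X -> X -> Prop) :=
  simple_graph E /\ measurable [set p : X * X | E p.1 p.2].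

Variable nu : probability X R.

Definition mcp (E : X -> X -> Prop) :=
  forall f g : X -> X, cancel f g -> cancel g f ->
    measurable_fun setT f -> measurable_fun setT g ->
    (forall x, connect E x (f x)) ->
    forall A, measurable A -> nu A = 0%E -> nu (f @^-1` A) = 0%E.

Definition hyperfinite (E : X -> X -> Prop) :=
  exists Gn : nat -> X -> X -> Prop,
    (forall n, measurable_graph (Gn n)) /\
    (forall n x y, Gn n x y -> Gn n.+1 x y) /\
    (forall x y, E x y <-> exists n, Gn n x y) /\
    (forall n, {ae nu, forall x, finite_set (gcomp (Gn n) x)}).

Definition one_ended (E : X -> X -> Prop) := {ae nu, forall x, one_ended_at E x}.

Definition measurable_spanning_tree (E T : X -> X -> Prop) :=
  measurable_graph T /\ (forall x y, T x y -> E x y) /\ acyclic T /\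
  {ae nu, forall x, gcomp T x = gcomp E x}.

End Measurable.

From Pilot Require Import Defs.
From mathcomp Require Import all_boot all_order all_algebra.
From mathcomp Require Import all_classical all_reals all_analysis.
From mathcomp Require Import zify.
Set Implicit Arguments. Unset Strict Implicit.
Local Open Scope classical_set_scope.

(* Deleting an edge uv of the spanning tree splits the component into the two
   sides of uv, and the fundamental cycles through uv correspond to the
   non-tree edges crossing from one side to the other.  By local finiteness,
   a core edge therefore has two infinite sides.  A non-core edge is crossed
   by finitely many edges; removing their endpoints leaves the two sides
   disconnected, so by one-endedness one side is finite.  If the component
   contains a core edge, let t be the vertex of a component K of T minus the
   core closest to it: for every edge tc of K the core edge, hence an infinite
   set, lies on the side of t, so the side of c is finite, and K is covered by
   these finitely many finite sides. *)

Section ConnectIn.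
Variable X : Type.
Implicit Types (R : X -> X -> Prop) (A : set X) (p : nat -> X).

Lemma connect_in_subpath A R p k l : k <= l ->
  (forall i, k <= i <= l -> A (p i)) -> (forall i, k <= i < l -> R (p i) (p i.+1)) ->
  connect_in A R (p k) (p l).
Proof.
move=> kl pA pR; exists (l - k), (fun i => p (k + i)); do !split.
- by rewrite addn0.
- by congr p; lia.
- by move=> i il; apply: pA; lia.
- by move=> i il; rewrite addnS; apply: pR; lia.
Qed.

Lemma connect_in_refl A R x : A x -> connect_in A R x x.
Proof.
by move=> Ax; apply: (connect_in_subpath (p := fun=> x) (leqnn 0)).
Qed.

Lemma connect_in1 A R x y : A x -> A y -> R x y -> connect_in A R x y.
Proof.
move=> Ax Ay Rxy.
by apply: (connect_in_subpath (p := fun i => if i == 0 then x else y) (leqnSn 0)) => -[|[|]].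
Qed.

Lemma connect_in_sub A B R R' x y : A `<=` B -> (forall a b, R a b -> R' a b) ->
  connect_in A R x y -> connect_in B R' x y.
Proof.
move=> AB RR' [n [p [p0 [pn [pA pR]]]]]; exists n, p; do !split => //.
- by move=> i /pA /AB.
- by move=> i /pR /RR'.
Qed.

Lemma connect_in_trans A R x y z :
  connect_in A R x y -> connect_in A R y z -> connect_in A R x z.
Proof.
move=> [m [p [p0 [pm [pA pR]]]]] [n [q [q0 [qn [qA qR]]]]].
exists (m + n), (fun i => if i <= m then p i else q (i - m)); do !split.
- by rewrite leq0n.
- case: ifP => h; last by rewrite addKn.
  have n0 : n = 0 by lia.
  by rewrite n0 addn0 pm -q0 -n0.
- by move=> i im /=; case: ifP => h; [apply: pA | apply: qA]; lia.
move=> i im /=; case: (ltngtP i m) => h.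
- by apply: pR.
- have -> : i.+1 - m = (i - m).+1 by lia.
  by apply: qR; lia.
- by rewrite h pm subSnn -q0; apply: qR; lia.
Qed.

Lemma connect_in_sym A R x y : (forall a b, R a b -> R b a) ->
  connect_in A R x y -> connect_in A R y x.
Proof.
move=> Rsym [n [p [p0 [pn [pA pR]]]]]; exists n, (fun i => p (n - i)); do !split.
- by rewrite subn0.
- by rewrite subnn.
- by move=> i hi; apply: pA; lia.
move=> i hi; apply: Rsym; have -> : n - i = (n - i.+1).+1 by lia.
by apply: pR; lia.
Qed.

Lemma connect_in_stepr A R x y z :
  connect_in A R x y -> A z -> R y z -> connect_in A R x z.
Proof.
move=> cxy Az Ryz; apply: (connect_in_trans cxy) (connect_in1 _ Az Ryz).
by case: cxy => n [p [_ [<- [pA _]]]]; apply: pA.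
Qed.

Lemma path_first_exit (P : set X) n p : P (p 0) -> ~ P (p n) ->
  exists2 k, k < n & (forall i, i <= k -> P (p i)) /\ ~ P (p k.+1).
Proof.
move=> P0 Pn; have exNP : exists m, `[< ~ P (p m) >] by exists n; apply/asboolP.
case: (ex_minnP exNP) => m /asboolP Pm m_min.
have m_gt0 : 0 < m by case: m Pm {m_min}.
have m_le_n : m <= n by apply: m_min; apply/asboolP.
exists m.-1; first lia.
split; last by rewrite prednK.
move=> i im; apply: contrapT => NPi.
have : m <= i by apply: m_min; apply/asboolP.
lia.
Qed.

Lemma connect_in_gcomp R w z : Defs.connect R w z -> connect_in (gcomp R w) R w z.
Proof.
move=> [n [p [p0 [pn [_ pR]]]]]; exists n, p; do 3!split=> //.
move=> i i_le; rewrite /gcomp /= -p0; apply: connect_in_subpath => // k /andP[_ ki].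
by apply: pR; lia.
Qed.

(* A shortest path has no repeated vertex. *)
Lemma connect_in_injective_path A R x y : connect_in A R x y ->
  exists n p, [/\ p 0 = x, p n = y, forall i, i <= n -> A (p i),
    forall i, i < n -> R (p i) (p i.+1) &
    forall i j, i <= n -> j <= n -> p i = p j -> i = j].
Proof.
pose walk m p := [/\ p 0 = x, p m = y, forall i, i <= m -> A (p i) &
  forall i, i < m -> R (p i) (p i.+1)].
move=> cxy; have exW : exists m, `[< exists p, walk m p >].
  by case: cxy => m [p [? [? [? ?]]]]; exists m; apply/asboolP; exists p.
case: (ex_minnP exW) => n /asboolP [p [p0 pn pA pR]] n_min.
exists n, p; split => //.
suff no_loop i j : i < j -> j <= n -> p i = p j -> False.
  move=> i j ? ? pij; case: (ltngtP i j) => // h; exfalso.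
  - exact: no_loop h _ pij.
  - exact: no_loop h _ (esym pij).
move=> ij jn pij; have : n <= n - (j - i); last lia.
apply: n_min; apply/asboolP.
exists (fun k => if k <= i then p k else p (k + (j - i))); split.
- by rewrite leq0n.
- case: ifP => h; last by rewrite subnK; [|lia].
  have -> : n - (j - i) = i by lia.
  by rewrite pij (_ : j = n) //; lia.
- by move=> k hk; case: ifP => h; apply: pA; lia.
move=> k hk; case: (ltngtP k i) => h.
- by apply: pR; lia.
- by rewrite addSn; apply: pR; lia.
- rewrite h addSn subnKC ?pij; last lia.
  by apply: pR; lia.
Qed.

End ConnectIn.

Section CycleEdges.
Variables (X : Type) (E : X -> X -> Prop).
Implicit Types p : nat -> X.

Lemma rot_indexS n k i : ((k + i) %% n).+1 %% n = (k + i.+1) %% n.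
Proof. by rewrite -addn1 modnDml addn1 addnS. Qed.

Lemma rot_index_inj n k i j : i < n -> j < n -> (k + i) %% n = (k + j) %% n -> i = j.
Proof. by move=> ilt jlt /eqP; rewrite eqn_modDl !modn_small // => /eqP. Qed.

Lemma rot_index_surj n k r : r < n -> exists2 i, i < n & (k + i) %% n = r.
Proof.
move=> rn; have n_gt0 : 0 < n by lia.
exists ((r + (n - k %% n)) %% n); first by rewrite ltn_mod.
rewrite modnDmr {1}(divn_eq k n).
have := ltn_pmod k n_gt0; move: (k %/ n) (k %% n) => q s sn.
have -> : q * n + s + (r + (n - s)) = q.+1 * n + r by rewrite mulSn; lia.
by rewrite modnMDl modn_small.
Qed.

Definition rot_cycle n k p i := p ((k + i) %% n).

Lemma cycle_edges_rot n k p : 0 < n -> cycle_edges n (rot_cycle n k p) = cycle_edges n p.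
Proof.
move=> n_gt0; apply/seteqP; split=> e [i [ilt ei]].
  exists ((k + i) %% n); split; first by rewrite ltn_mod.
  by rewrite rot_indexS; rewrite /rot_cycle modnDmr in ei.
have [j jlt eq_i] := rot_index_surj k ilt; rewrite -eq_i in ei.
by exists j; split=> //; rewrite /rot_cycle modnDmr -rot_indexS.
Qed.

Lemma is_cycle_rot n k p : is_cycle E n p -> is_cycle E n (rot_cycle n k p).
Proof.
move=> [n3 [p_inj pE]]; have n_gt0 : 0 < n by lia.
split=> //; split.
  move=> i j ilt jlt /p_inj eq_ij; apply: (rot_index_inj ilt jlt).
  by apply: eq_ij; rewrite ltn_mod.
move=> i ilt; rewrite /rot_cycle modnDmr -rot_indexS.
by apply: pE; rewrite ltn_mod.
Qed.

Lemma cycle_edges_sym n p a b : cycle_edges n p (a, b) -> cycle_edges n p (b, a).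
Proof. by move=> [i [ilt [] [-> ->]]]; exists i; split=> //; [right | left]. Qed.

Lemma cycle_edges_path n p i : i < n.-1 -> cycle_edges n p (p i, p i.+1).
Proof. by move=> ilt; exists i; split; [lia | left; rewrite modn_small //; lia]. Qed.

Lemma cycle_edges_last n p : 0 < n -> cycle_edges n p (p n.-1, p 0).
Proof. by move=> n_gt0; exists n.-1; split; [lia | left; rewrite prednK ?modnn]. Qed.

End CycleEdges.

Section InfiniteComponent.
Variables (X : Type) (R : X -> X -> Prop).
Hypothesis Rsym : forall a b, R a b -> R b a.
Hypothesis R_lf : locally_finite R.

(* Each component of [S `\` F] contains [s0] or a neighbour of [F]. *)
Lemma infinite_component_setD (S F : set X) s0 : S s0 ->
  (forall z, S z -> connect_in S R s0 z) -> infinite_set S -> finite_set F ->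
  exists2 y, (S `\` F) y & infinite_set [set z | connect_in (S `\` F) R y z].
Proof.
move=> Ss0 S_conn S_inf F_fin; apply: contrapT => no_inf.
have comp_fin y : (S `\` F) y -> finite_set [set z | connect_in (S `\` F) R y z].
  by move=> SFy; apply: contrapT => comp_inf; apply: no_inf; exists y.
pose M := [set w | (S `\` F) w /\ (w = s0 \/ exists2 f, F f & R f w)].
have M_fin : finite_set M.
  apply: (@sub_finite_set _ _ ([set s0] `|` \bigcup_(f in F) [set w | R f w])).
    by move=> w [_ [-> | [f Ff Rfw]]]; [left | right; exists f].
  by rewrite finite_setU; split; [apply: finite_set1 | apply: bigcup_finite].
have SF_fin : finite_set (S `\` F).
  apply: (sub_finite_set _ (bigcup_finite M_fin (fun w Mw => comp_fin w Mw.1))).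
  move=> z [Sz Fz]; have [n [r [r0 [rn [rS rR]]]]] := connect_in_sym Rsym (S_conn z Sz).
  have SF_prefix k : k <= n -> (forall i, i <= k -> ~ F (r i)) ->
      connect_in (S `\` F) R (r k) z.
    move=> k_le NF; rewrite -r0; apply/(connect_in_sym Rsym)/connect_in_subpath => // i.
      by move=> /andP[_ ik]; split; [apply: rS; lia | apply: NF].
    by move=> /andP[_ ik]; apply: rR; lia.
  case: (pselect (exists2 i, i <= n & F (r i))) => [[i i_le Fi] | noF].
    have NF0 : (~` F) (r 0) by rewrite r0.
    have [k k_lt [NF NFk]] := path_first_exit NF0 (fun NFi : (~` F) (r i) => NFi Fi).
    exists (r k); last by apply: SF_prefix; [lia | apply: NF].
    split; first by split; [apply: rS; lia | apply: NF].
    by right; exists (r k.+1); [apply: contrapT | apply/Rsym/rR; lia].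
  have NF i : i <= n -> ~ F (r i) by move=> i_le Fi; apply: noF; exists i.
  exists s0; last by rewrite -rn; apply: SF_prefix.
  by split; [split => //; rewrite -rn; apply: NF | left].
apply/S_inf/(@sub_finite_set _ _ ((S `\` F) `|` F)); last by rewrite finite_setU.
by move=> z Sz; case: (pselect (F z)) => Fz; [right | left].
Qed.

End InfiniteComponent.

Section SpanningTree.
Variables (X : Type) (E T : X -> X -> Prop).
Hypothesis Esym : forall a b, E a b -> E b a.
Hypothesis Eirr : forall a, ~ E a a.
Hypothesis Tsym : forall a b, T a b -> T b a.
Hypothesis Tirr : forall a, ~ T a a.
Hypothesis Tacyclic : Defs.acyclic T.
Hypothesis TE : forall a b, T a b -> E a b.
Hypothesis E_lf : locally_finite E.
Implicit Types p q : nat -> X.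

Definition del_edge u v a b := T a b /\ ~ (a = u /\ b = v) /\ ~ (a = v /\ b = u).

Definition side u v := Defs.connect (del_edge u v).

Lemma del_edge_sym u v a b : del_edge u v a b -> del_edge u v b a.
Proof.
by move=> [/Tsym Tba [nuv nvu]]; split=> //; split=> -[? ?]; [apply: nvu | apply: nuv].
Qed.

Lemma del_edge_swap u v a b : del_edge u v a b -> del_edge v u a b.
Proof. by move=> [? [? ?]]. Qed.

Lemma not_del_edge u v a b : T a b -> ~ del_edge u v a b ->
  (a = u /\ b = v) \/ (a = v /\ b = u).
Proof.
move=> Tab Nab; apply: contrapT => /not_orP[? ?].
by apply: Nab; split.
Qed.

Lemma side_refl u v w : side u v w w.
Proof. exact: connect_in_refl. Qed.

Lemma side_sym u v w z : side u v w z -> side u v z w.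
Proof. exact/connect_in_sym/del_edge_sym. Qed.

Lemma side_trans u v w y z : side u v w y -> side u v y z -> side u v w z.
Proof. exact: connect_in_trans. Qed.

Lemma side_swap u v w z : side u v w z -> side v u w z.
Proof. exact/connect_in_sub/del_edge_swap. Qed.

Lemma side_connect u v w z : side u v w z -> Defs.connect T w z.
Proof. by apply: connect_in_sub => // a b []. Qed.

Lemma side_stepr u v w a b : side u v w a -> del_edge u v a b -> side u v w b.
Proof. by move=> wa /(connect_in_stepr wa); apply. Qed.

Lemma tree_edge_bridge u v : T u v -> ~ side u v u v.
Proof.
move=> Tuv uv; have [n [p [p0 pn _ pE p_inj]]] := connect_in_injective_path uv.
case: n pn pE p_inj => [|[|n]] pn pE p_inj.
- by move: Tuv; rewrite -p0 pn => /Tirr.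
- by case: (pE 0 isT) => _ [+ _]; rewrite p0 pn; apply.
apply: (Tacyclic (n := n.+3) (p := p)); split => //; split.
  by move=> i j ilt jlt; apply: p_inj.
move=> i; rewrite ltnS leq_eqVlt => /orP[/eqP -> | ilt].
  by rewrite modnn p0 pn; apply: Tsym.
by rewrite modn_small //; case: (pE i ilt).
Qed.

Lemma sides_disjoint u v z : T u v -> side u v u z -> side u v v z -> False.
Proof. by move=> /tree_edge_bridge uv uz vz; apply/uv/(side_trans uz)/side_sym. Qed.

Lemma side_cover u v w : T u v -> Defs.connect T u w -> side u v u w \/ side u v v w.
Proof.
move=> Tuv [n [p [p0 [<- [_ pT]]]]].
suff sides k : k <= n -> side u v u (p k) \/ side u v v (p k) by apply: sides.
elim: k => [|k IH] kn; first by rewrite p0; left; apply: side_refl.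
have := pT k kn; case: (pselect (del_edge u v (p k) (p k.+1))) => [Dk _ | NDk /not_del_edge].
  by case: (IH (ltnW kn)) => /side_stepr-/(_ _ Dk); auto.
by case/(_ _ _ NDk) => -[_ ->]; [right | left]; apply: side_refl.
Qed.

Lemma side_edge_crossing u v a b : T u v -> T a b ->
  side u v u a -> side u v v b -> a = u /\ b = v.
Proof.
move=> Tuv Tab ua vb; case: (pselect (del_edge u v a b)) => [Dab | /(not_del_edge Tab)].
  by case: (sides_disjoint Tuv (side_stepr ua Dab) vb).
by case=> // -[ea _]; move: ua; rewrite ea => /(tree_edge_bridge Tuv).
Qed.

Lemma path_crosses_edge u v n p : T u v -> (forall i, i < n -> T (p i) (p i.+1)) ->
  side u v u (p 0) -> side u v v (p n) -> exists2 k, k < n & p k = u /\ p k.+1 = v.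
Proof.
move=> Tuv pT u0 vn.
have Nun : ~ side u v u (p n) by move/sides_disjoint; apply.
have [k kn [upre Nuk]] := path_first_exit u0 Nun.
have ck : Defs.connect T u (p k.+1).
  apply: connect_in_trans (side_connect u0) _.
  by apply: connect_in_subpath => // i /andP[_ ik]; apply: pT; lia.
case: (side_cover Tuv ck) => // vk.
by exists k => //; apply: side_edge_crossing (pT k kn) (upre k (leqnn k)) vk.
Qed.

Lemma injective_path_sides m q i : (forall k, k < m -> T (q k) (q k.+1)) ->
  (forall k l, k <= m -> l <= m -> q k = q l -> k = l) -> i < m ->
  side (q i) (q i.+1) (q i) (q 0) /\ side (q i) (q i.+1) (q i.+1) (q m).
Proof.
move=> qT q_inj im; have qD k : k < m -> k != i -> del_edge (q i) (q i.+1) (q k) (q k.+1).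
  move=> km ki; split; first exact: qT.
  have [k_le k1_le i_le i1_le] : [/\ k <= m, k.+1 <= m, i <= m & i.+1 <= m] by split; lia.
  split=> -[eq1 eq2].
  - by move: ki; rewrite (q_inj _ _ k_le i_le eq1) eqxx.
  - by have := q_inj _ _ k_le i1_le eq1; have := q_inj _ _ k1_le i_le eq2; lia.
split.
  apply/side_sym/connect_in_subpath => // k /andP[_ ki].
  by apply: qD; lia.
by apply: connect_in_subpath => // k /andP[ik km]; apply: qD; lia.
Qed.

Lemma side_subset u v t c z : ~ side u v z c -> side u v z `<=` side t c z.
Proof.
move=> Nzc w [n [p [p0 [pn [_ pD]]]]]; exists n, p; do 3!split=> //; move=> i ilt.
have zp j : j <= n -> side u v z (p j).
  move=> jn; rewrite -p0; apply: connect_in_subpath => // k /andP[_ kj].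
  by apply: pD; lia.
have [Tp _] := pD i ilt; split=> //; split=> -[e1 e2]; apply: Nzc.
- by rewrite -e2; apply: zp.
- by rewrite -e1; apply: zp; lia.
Qed.

Lemma connect_sub_sides (M : X -> X -> Prop) t k : (forall a b, M a b -> T a b) ->
  Defs.connect M t k -> k = t \/ exists2 c, M t c & side t c c k.
Proof.
move=> MT /(@connect_in_injective_path X) [m [r [r0 rm _ rM r_inj]]].
case: m rm rM r_inj => [|m] rm rM r_inj; first by left; rewrite -rm r0.
right; exists (r 1); first by rewrite -r0; apply: rM.
rewrite -rm; apply: connect_in_subpath => // i /andP[i_ge i_lt].
split; first exact/MT/rM.
split=> -[e1 e2].
- by have := r_inj i 0 (ltnW i_lt) (leq0n _) (etrans e1 (esym r0)); lia.
- by have := r_inj i.+1 0 i_lt (leq0n _) (etrans e2 (esym r0)).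
Qed.

Definition separates u v a b :=
  (side u v u a /\ side u v v b) \/ (side u v v a /\ side u v u b).

(* The edges of the cycle closed by [ab] in the tree [T]. *)
Definition fundamental_edges a b : set (X * X) :=
  [set e | e = (a, b) \/ e = (b, a) \/ (T e.1 e.2 /\ separates e.1 e.2 a b)].

Lemma fundamental_edgesC a b : fundamental_edges a b = fundamental_edges b a.
Proof.
suff sub a' b' : fundamental_edges a' b' `<=` fundamental_edges b' a'.
  by apply/seteqP; split; apply: sub.
move=> e [-> | [-> | [Te [[? ?] | [? ?]]]]]; [by right; left | by left | |].
- by right; right; split=> //; right.
- by right; right; split=> //; left.
Qed.

Lemma fundamental_edges_nontree a b : ~ T a b ->
  [set e | fundamental_edges a b e /\ ~ T e.1 e.2] = [set (a, b)] `|` [set (b, a)].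
Proof.
move=> NTab; apply/seteqP; split=> e.
  by move=> [[-> | [-> | [Te _]]] NTe]; [left | right | ].
by case=> ->; split; [left | by [] | right; left | move/Tsym].
Qed.

Lemma cycle_tree_path n p : is_cycle E n p ->
  (forall e, cycle_edges n p e -> ~ T e.1 e.2 -> e = (p n.-1, p 0) \/ e = (p 0, p n.-1)) ->
  forall i, i < n.-1 -> T (p i) (p i.+1).
Proof.
move=> [n3 [p_inj _]] nontree i ilt; apply: contrapT => NT.
have [i_lt i1_lt last_lt zero_lt] : [/\ i < n, i.+1 < n, n.-1 < n & 0 < n] by split; lia.
case: (nontree _ (cycle_edges_path p ilt) NT) => -[ei ei1].
- by have := p_inj _ _ i_lt last_lt ei; lia.
- by have := p_inj _ _ i_lt zero_lt ei; have := p_inj _ _ i1_lt last_lt ei1; lia.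
Qed.

Lemma cycle_edges_fundamental n p : is_cycle E n p ->
  (forall i, i < n.-1 -> T (p i) (p i.+1)) ->
  cycle_edges n p = fundamental_edges (p n.-1) (p 0).
Proof.
move=> [n3 [p_inj _]] pT; have n_gt0 : 0 < n by lia.
have path_inj i j : i <= n.-1 -> j <= n.-1 -> p i = p j -> i = j.
  by move=> ? ?; apply: p_inj; lia.
apply/seteqP; split=> e.
  move=> [i [ilt ei]]; case: (ltnP i n.-1) => [i_lt | i_ge].
    have [si sn] := injective_path_sides pT path_inj i_lt.
    rewrite modn_small in ei; last lia.
    case: ei => -> /=; right; right; split.
    - exact: pT.
    - by right.
    - exact/Tsym/pT.
    - by left; split; apply: side_swap.
  have i_last : i = n.-1 by lia.
  by rewrite i_last prednK ?modnn // in ei; case: ei => ->; [left | right; left].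
move=> [-> | [-> | [Te sep]]]; first exact: cycle_edges_last.
  exact/cycle_edges_sym/cycle_edges_last.
case: e Te sep => u v /= Tuv [[ua vb] | [va ub]].
- have [k k_lt [<- <-]] := path_crosses_edge (Tsym Tuv) pT (side_swap vb) (side_swap ua).
  exact/cycle_edges_sym/cycle_edges_path.
- have [k k_lt [<- <-]] := path_crosses_edge Tuv pT ub va.
  exact: cycle_edges_path.
Qed.

Lemma fundamental_edges_cycle a b : E a b -> ~ T a b -> Defs.connect T b a ->
  fundamental_cycle E T (fundamental_edges a b).
Proof.
move=> Eab NTab /(@connect_in_injective_path X) [m [q [q0 qm _ qT q_inj]]].
have m_ge2 : 2 <= m.
  case: m qm qT {q_inj} => [|[|//]] qm qT.
  - by move: Eab; rewrite -qm q0 => /Eirr.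
  - by case: NTab; apply: Tsym; rewrite -q0 -qm; apply: qT.
have qcyc : is_cycle E m.+1 q.
  split; first lia; split; first by move=> i j ? ?; apply: q_inj.
  move=> i; rewrite ltnS leq_eqVlt => /orP[/eqP -> | i_lt].
    by rewrite modnn qm q0.
  by rewrite modn_small //; apply/TE/qT.
have Cq := cycle_edges_fundamental qcyc qT; rewrite /= qm q0 in Cq.
exists m.+1, q; split=> //; split; first by rewrite Cq.
by exists a, b; apply: fundamental_edges_nontree.
Qed.

Lemma fundamental_cycle_edges C : fundamental_cycle E T C ->
  exists a b, [/\ E a b, ~ T a b & C = fundamental_edges a b].
Proof.
move=> [n [p [cyc [-> [a [b NT]]]]]].
have [[j [j_lt ej]] NTab] : [set e | cycle_edges n p e /\ ~ T e.1 e.2] (a, b).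
  by rewrite NT; left.
have n_gt0 : 0 < n by lia.
pose q := rot_cycle n j.+1 p.
have q_last : q n.-1 = p j.
  by rewrite /q /rot_cycle addSnnS prednK // modnDr modn_small.
have q0 : q 0 = p (j.+1 %% n) by rewrite /q /rot_cycle addn0.
have Cq : cycle_edges n q = cycle_edges n p by apply: cycle_edges_rot.
have qcyc : is_cycle E n q by apply: is_cycle_rot.
have q_nontree e : cycle_edges n q e -> ~ T e.1 e.2 ->
    e = (q n.-1, q 0) \/ e = (q 0, q n.-1).
  rewrite Cq q_last q0 => Ce NTe.
  have : [set e | cycle_edges n p e /\ ~ T e.1 e.2] e by [].
  by rewrite NT; case: ej => -[-> ->] [] ->; auto.
have := cycle_edges_fundamental qcyc (cycle_tree_path qcyc q_nontree).
rewrite Cq q_last q0 => ->.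
exists (p j), (p (j.+1 %% n)); split=> //; first by case: cyc => _ [_]; apply.
by case: ej => -[ea eb]; rewrite -ea -eb // => /Tsym.
Qed.

Lemma fundamental_cycle_sym C u v : fundamental_cycle E T C -> C (u, v) -> C (v, u).
Proof. by move=> [n [p [_ [-> _]]]]; apply: cycle_edges_sym. Qed.

Definition fundamental_cycles_through u v :=
  [set C | fundamental_cycle E T C /\ C (u, v)].

Definition crossing_edges u v : set (X * X) :=
  [set ab | [/\ side u v u ab.1, side u v v ab.2, E ab.1 ab.2 & ~ T ab.1 ab.2]].

Lemma core_sym u v : core E T (u, v) -> core E T (v, u).
Proof.
move=> [/= /Tsym Tvu C_inf]; split=> //; apply: sub_infinite_set C_inf.
by move=> C [fC Cuv]; split=> //; apply: fundamental_cycle_sym fC Cuv.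
Qed.

Lemma minus_core_sym u v : minus_core E T u v -> minus_core E T v u.
Proof. by move=> [/Tsym Tvu NC]; split=> // /core_sym. Qed.

(* A fundamental cycle is determined by its non-tree edge, which must cross
   every tree edge of the cycle. *)
Lemma core_side_infinite u v : T u v ->
  infinite_set (fundamental_cycles_through u v) -> infinite_set (side u v u).
Proof.
move=> Tuv C_inf side_fin; apply: C_inf.
pose P := \bigcup_(a in side u v u) [set (a, b) | b in [set b | E a b]].
have P_fin : finite_set P.
  by apply: bigcup_finite => // a _; apply/finite_image/E_lf.
apply: (sub_finite_set _ (finite_image (fun ab => fundamental_edges ab.1 ab.2) P_fin)).
move=> C [fC]; have [a [b [Eab NTab ->]]] := fundamental_cycle_edges fC.
case=> [/pair_equal_spec[eu ev] | [/pair_equal_spec[eu ev] | [_ [[ua _] | [_ ub]]]]].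
- by case: NTab; rewrite -eu -ev.
- by case: NTab; apply: Tsym; rewrite -eu -ev.
- by exists (a, b) => //; exists a => //; exists b.
- exists (b, a); last by rewrite fundamental_edgesC.
  by exists b => //; exists a => //; apply: Esym.
Qed.

Lemma core_sides_infinite u v : core E T (u, v) ->
  infinite_set (side u v u) /\ infinite_set (side u v v).
Proof.
move=> uv_core; have [[Tuv uv_inf] [Tvu vu_inf]] := (uv_core, core_sym uv_core).
split; first exact: core_side_infinite.
move=> v_fin; apply: (core_side_infinite Tvu vu_inf).
by apply: (sub_finite_set _ v_fin) => w; apply: side_swap.
Qed.

Lemma crossing_edges_finite u v : T u v ->
  finite_set (fundamental_cycles_through u v) -> finite_set (crossing_edges u v).
Proof.
move=> Tuv C_fin.
pose nontree C := [set e | C e /\ ~ T e.1 e.2].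
apply: (sub_finite_set _ (bigcup_finite C_fin (F := nontree) _)).
  move=> [a b] [/= ua vb Eab NTab]; exists (fundamental_edges a b); last by split=> //; left.
  split; last by right; right; split=> //; left.
  apply: fundamental_edges_cycle => //.
  apply: connect_in_trans (side_connect (side_sym vb)) _.
  exact: connect_in_trans (connect_in1 I I (Tsym Tuv)) (side_connect ua).
move=> C [[n [p [_ [_ [a [b NT]]]]]] _].
by rewrite /nontree NT finite_setU; split; apply: finite_set1.
Qed.

Variable x : X.
Hypothesis x_one_ended : one_ended_at E x.
Hypothesis T_spans : gcomp T x = gcomp E x.

Lemma gcomp_connect_tree w w' : gcomp E x w -> gcomp E x w' -> Defs.connect T w w'.
Proof.
by rewrite -T_spans => xw xw'; apply: connect_in_trans (connect_in_sym Tsym xw) xw'.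
Qed.

Lemma side_gcomp u v s w : gcomp E x s -> side u v s w -> gcomp E x w.
Proof.
move=> xs sw; apply: connect_in_trans xs _.
exact: connect_in_sub (fun _ a => a) TE (side_connect sw).
Qed.

(* Both sides would contain an end of the component; one-endedness joins
   them by a path avoiding the tails [u] of the finitely many crossing edges. *)
Lemma noncore_edge_side_finite u v : gcomp E x u -> T u v -> ~ core E T (u, v) ->
  finite_set (side u v u) \/ finite_set (side u v v).
Proof.
move=> xu Tuv NC; apply: contrapT => /not_orP[u_inf v_inf].
have C_fin : finite_set (fundamental_cycles_through u v).
  by apply: contrapT => C_inf; apply: NC.
pose F := [set u] `|` fst @` crossing_edges u v.
have F_fin : finite_set F.
  rewrite finite_setU; split; first exact: finite_set1.
  exact/finite_image/crossing_edges_finite.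
have [_ one_end] := x_one_ended F_fin; pose V := gcomp E x `\` F.
have end_in_side s : gcomp E x s -> infinite_set (side u v s) ->
    exists2 y, side u v s y /\ V y & infinite_set [set z | connect_in V E y z].
  move=> xs s_inf; have s_conn z : side u v s z -> connect_in (side u v s) E s z.
    by move=> sz; apply: connect_in_sub (connect_in_gcomp sz) => // a b [/TE].
  have [y [sy Fy] y_inf] :=
    infinite_component_setD Esym E_lf (side_refl _ _ _) s_conn s_inf F_fin.
  exists y; first by split=> //; split=> //; apply: side_gcomp xs sy.
  apply: sub_infinite_set y_inf => z; apply: connect_in_sub => // w [sw Fw].
  by split=> //; apply: side_gcomp xs sw.
have [y1 [uy1 Vy1] y1_inf] := end_in_side u xu u_inf.
have [y2 [vy2 Vy2] y2_inf] := end_in_side v (connect_in_stepr xu I (TE Tuv)) v_inf.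
have [n [r [r0 [rn [rV rE]]]]] := one_end y1 y2 Vy1 Vy2 y1_inf y2_inf.
have u_r0 : side u v u (r 0) by rewrite r0.
have Nu_rn : ~ side u v u (r n) by rewrite rn => /(sides_disjoint Tuv); apply.
have [k k_lt [u_pre Nu_k1]] := path_first_exit u_r0 Nu_rn.
have [[xk Fk] [xk1 _]] := (rV k (ltnW k_lt), rV k.+1 k_lt).
have v_k1 : side u v v (r k.+1) by case: (side_cover Tuv (gcomp_connect_tree xu xk1)).
apply: Fk; case: (pselect (T (r k) (r k.+1))) => [Tk | NTk].
  by left; have [-> _] := side_edge_crossing Tuv Tk (u_pre k (leqnn k)) v_k1.
by right; exists (r k, r k.+1) => //; split=> //; [apply: u_pre | apply: rE].
Qed.

Lemma far_side_finite t c u0 v0 : gcomp E x t -> minus_core E T t c ->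
  core E T (u0, v0) -> side t c t u0 -> finite_set (side t c c).
Proof.
move=> xt [Ttc NCtc] uv_core tu0.
have [u0_inf v0_inf] := core_sides_infinite uv_core.
have tv0 : side t c t v0.
  apply: side_stepr tu0 _; split; first by case: uv_core.
  split=> -[eu ev]; apply: NCtc; rewrite -eu -ev //.
  exact: core_sym uv_core.
have t_inf : infinite_set (side t c t).
  have Tuv0 : T u0 v0 by case: uv_core.
  case: (pselect (side u0 v0 u0 c)) => [u0c | Nu0c].
    have Nv0c : ~ side u0 v0 v0 c by move/(sides_disjoint Tuv0 u0c).
    by apply: sub_infinite_set v0_inf => w /(side_subset t Nv0c); apply: side_trans tv0.
  by apply: sub_infinite_set u0_inf => w /(side_subset t Nu0c); apply: side_trans tu0.
by case: (noncore_edge_side_finite xt Ttc NCtc).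
Qed.

(* The vertex [t] of the component closest to [u0] sees the core edge on its
   own side of each of its edges, so all the other sides are finite. *)
Lemma minus_core_component_finite y u0 v0 : gcomp E x y -> gcomp E x u0 ->
  core E T (u0, v0) -> finite_set (gcomp (minus_core E T) y).
Proof.
move=> xy xu0 uv_core; have [n [p [p0 [pn [_ pT]]]]] := gcomp_connect_tree xu0 xy.
pose K := gcomp (minus_core E T) y.
have mcT a b : minus_core E T a b -> T a b by case.
have Kpn : K (p n) by rewrite pn; apply: connect_in_refl.
have exK : exists j, `[< K (p j) >] by exists n; apply/asboolP.
case: (ex_minnP exK) => j /asboolP Kt j_min.
have j_le : j <= n by apply: j_min; apply/asboolP.
have xt : gcomp E x (p j).
  apply: connect_in_trans xy (connect_in_sub (fun _ h => h) _ Kt).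
  by move=> a b /mcT /TE.
have tu0 c : minus_core E T (p j) c -> side (p j) c (p j) u0.
  move=> tc; case: (side_cover tc.1 (gcomp_connect_tree xt xu0)) => // cu0.
  have c_p0 : side c (p j) c (p 0) by rewrite p0; apply: side_swap.
  have [k k_lt [pk _]] := path_crosses_edge (Tsym tc.1) (n := j)
    (fun i i_lt => pT i (leq_trans i_lt j_le)) c_p0 (side_refl _ _ _).
  have : j <= k by apply: j_min; apply/asboolP; rewrite pk; apply: connect_in_stepr Kt I tc.
  lia.
pose sides := \bigcup_(c in minus_core E T (p j)) side (p j) c c.
apply: (@sub_finite_set _ _ ([set p j] `|` sides)).
  move=> k Kk; have tk := connect_in_trans (connect_in_sym minus_core_sym Kt) Kk.
  by case: (connect_sub_sides mcT tk) => [-> | [c tc ck]]; [left | right; exists c].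
rewrite finite_setU; split; first exact: finite_set1.
apply: bigcup_finite => [|c tc]; last exact: far_side_finite xt tc uv_core (tu0 c tc).
by apply: (sub_finite_set _ (E_lf (p j))) => c /mcT /TE.
Qed.

Lemma one_ended_core_dichotomy :
  (forall u v, gcomp E x u -> minus_core E T u v = T u v) \/
  (forall y, gcomp E x y -> finite_set (gcomp (minus_core E T) y)).
Proof.
case: (pselect (exists u v, gcomp E x u /\ core E T (u, v))) => [|no_core].
  move=> [u0 [v0 [xu0 uv_core]]].
  by right=> y xy; apply: minus_core_component_finite xy xu0 uv_core.
left=> u v xu; apply/propext; split=> [[] // | Tuv]; split=> // uv_core.
by apply: no_core; exists u, v.
Qed.

End SpanningTree.

Theorem lemma3p17 (d : measure_display) (X : measurableType d) (R : realType)
  (nu : probability X R) (E T : X -> X -> Prop) :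
  @standard_borel d X R ->
  measurable_graph E -> locally_finite E -> one_ended nu E ->
  hyperfinite nu E -> mcp nu E -> measurable_spanning_tree nu E T ->
  {ae nu, forall x,
    (forall u v, gcomp E x u -> minus_core E T u v = T u v) \/
    (forall y, gcomp E x y -> finite_set (gcomp (minus_core E T) y))}.
Proof.
move=> _ [[Esym Eirr] _] E_lf E_one_ended _ _ [[[Tsym Tirr] _] [TE [Tacyclic T_spans]]].
apply: filterS2 E_one_ended T_spans => x x_one_ended x_spans.
exact: one_ended_core_dichotomy.
Qed.
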